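(* Let $q\ge 2$ and $n\ge 3$. If $\mathcal C\subseteq[q]^n$ is a code with insdel distance $d_I(\mathcal C)=2n-2$, then $|\mathcal C|\le \frac{q^2+q}{2}$.
   Context: $[q]=\{1,\dots,q\}$. For $\mathbf u,\mathbf v\in[q]^n$, the insdel distance $d_I(\mathbf u,\mathbf v)$ is the minimum number of insertions and deletions transforming $\mathbf u$ into $\mathbf v$; equivalently $d_I(\mathbf u,\mathbf v)=2n-2\ell_{\rm LCS}(\mathbf u,\mathbf v)$ where $\ell_{\rm LCS}$ is the length of a longest common subsequence. $d_I(\mathcal C)$ is the minimum insdel distance between distinct codewords. *)

From mathcomp Require Import all_boot.
Set Implicit Arguments. Unset Strict Implicit. Unset Printing Implicit Defensive.

Definition lcs_len (q n : nat) (u v : n.-tuple 'I_q) : nat :=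
  \max_(k < n.+1 | [exists s : k.-tuple 'I_q, subseq s u && subseq s v]) k.

Definition insdel_dist (q n : nat) (u v : n.-tuple 'I_q) : nat :=
  2 * n - 2 * lcs_len u v.

Definition code_insdel_dist_eq (q n : nat) (C : {set n.-tuple 'I_q}) (d : nat) : Prop :=
  (forall u v, u \in C -> v \in C -> u != v -> d <= insdel_dist u v) /\
  (exists u v, [/\ u \in C, v \in C, u != v & insdel_dist u v = d]).

From mathcomp Require Import all_boot.
From mathcomp Require Import zify.

Set Implicit Arguments.
Unset Strict Implicit.
Unset Printing Implicit Defensive.

(* Two codewords at insdel distance at least 2n - 2 have an LCS of length at
   most 1, so they share no subsequence of length 2.  Every word of length at
   least 3 contains two distinct "patterns": either two distinct subsequences
   xy, or a repeated letter x, counted once as the pair xx and once more as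
   the extra pattern x.  The pattern sets of the codewords are thus pairwise
   disjoint subsets of a set of size q^2 + q, each of size at least 2. *)

Lemma card_bigcup_disjoint (I T : finType) (A : {set I}) (F : I -> {set T}) :
  {in A &, forall i j, i != j -> [disjoint F i & F j]} ->
  #|\bigcup_(i in A) F i| = \sum_(i in A) #|F i|.
Proof.
rewrite -[A]set_enum; elim: (enum A) (enum_uniq A) => [|a e IHe] /=.
  by rewrite !big_set0 cards0.
case/andP=> a_e uniq_e; rewrite set_cons => disjF.
have disj_e : {in [set x in e] &, forall i j, i != j -> [disjoint F i & F j]}.
  by move=> i j ie je; apply: disjF; rewrite in_setU1 ?ie ?je orbT.
have disj_a : [disjoint F a & \bigcup_(i in [set x in e]) F i].
  apply/bigcup_disjoint => i ie.
  apply: disjF; rewrite ?setU11 ?in_setU1 ?ie ?orbT //.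
  by apply: contraNneq a_e => ->; rewrite inE in ie.
have a_notin_e : a \notin [set x in e] by rewrite inE.
rewrite big_setU1 // big_setU1 //= -(IHe uniq_e disj_e) cardsU.
by rewrite (disjoint_setI0 disj_a) cards0 subn0.
Qed.

Section Patterns.

Variable T : finType.

Definition pattern_seq (z : T * T + T) : seq T :=
  match z with inl (x, y) => [:: x; y] | inr x => [:: x; x] end.

Definition patterns (s : seq T) : {set T * T + T} :=
  [set z | subseq (pattern_seq z) s].

Lemma two_le_card_patterns (s : seq T) : 3 <= size s -> 2 <= #|patterns s|.
Proof.
case: s => [|a [|b [|c t]]] // _; apply/card_gt1P.
set P := patterns _.
have ab_in : inl (a, b) \in P by rewrite inE /= !eqxx ?sub0seq.
have ac_in : inl (a, c) \in P.
  by rewrite inE /= eqxx; case: ifP => //= _; rewrite eqxx sub0seq.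
have bc_in : inl (b, c) \in P.
  rewrite inE; apply: subseq_trans (subseq_cons _ a).
  by rewrite /= !eqxx ?sub0seq.
have rep_in x : (inr x \in P) = (inl (x, x) \in P) by rewrite !inE.
have [ab|_] := eqVneq a b.
  by rewrite -ab in ab_in; exists (inl (a, a)), (inr a); rewrite rep_in.
have [ac|_] := eqVneq a c.
  by rewrite -ac in ac_in; exists (inl (a, a)), (inr a); rewrite rep_in.
have [bc|bc] := eqVneq b c.
  by rewrite -bc in bc_in; exists (inl (b, b)), (inr b); rewrite rep_in.
by exists (inl (a, b)), (inl (a, c)); split=> //; apply: contra bc => /eqP[<-].
Qed.

End Patterns.

Section LongestCommonSubsequence.

Variables q n : nat.
Implicit Types u v : n.-tuple 'I_q.

Lemma lcs_len_le u v : lcs_len u v <= n.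
Proof. by apply/bigmax_leqP => k _; rewrite -ltnS. Qed.

Lemma common_subseq_le_lcs_len (s : seq 'I_q) u v :
  subseq s u -> subseq s v -> size s <= lcs_len u v.
Proof.
move=> su sv; have s_lt : size s < n.+1.
  by rewrite ltnS -(size_tuple u) size_subseq.
apply: (@leq_bigmax_cond _ _ (fun k : 'I_n.+1 => nat_of_ord k) (Ordinal s_lt)).
by apply/existsP; exists (in_tuple s); rewrite su sv.
Qed.

Lemma lcs_len_le1 u v : 2 * n - 2 <= insdel_dist u v -> lcs_len u v <= 1.
Proof. by rewrite /insdel_dist; have := lcs_len_le u v; lia. Qed.

Lemma disjoint_patterns u v :
  lcs_len u v <= 1 -> [disjoint patterns u & patterns v].
Proof.
move=> lcs_le1; apply/pred0P => z /=; apply/negbTE/negP.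
rewrite !inE => /andP[su sv].
have := common_subseq_le_lcs_len su sv.
by case: z {su sv} => [[x y]|x] /=; rewrite leqNgt (leq_ltn_trans lcs_le1).
Qed.

End LongestCommonSubsequence.

Theorem lemma3p4 (q n : nat) (C : {set n.-tuple 'I_q}) :
  2 <= q -> 3 <= n -> code_insdel_dist_eq C (2 * n - 2) ->
  #|C| <= (q ^ 2 + q) %/ 2.
Proof.
move=> _ n3 [far _].
have disjC : {in C &, forall u v : n.-tuple 'I_q,
                u != v -> [disjoint patterns u & patterns v]}.
  by move=> u v uC vC uv; apply/disjoint_patterns/lcs_len_le1/far.
rewrite leq_divRL // -sum_nat_const.
apply: (@leq_trans (\sum_(u in C) #|patterns u|)).
  by apply: leq_sum => u _; apply: two_le_card_patterns; rewrite size_tuple.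
rewrite -card_bigcup_disjoint //; apply: leq_trans (max_card _) _.
by rewrite card_sum card_prod card_ord.
Qed.
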